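(* For all integers $n\geq 1$ and all real $x\in(0,2\pi/3)$, $$\sum_{k=1}^n (n-k+1)(n-k+2)\bigl(1-\cos(kx)\bigr)>\frac{2}{27}\bigl(1-\cos(x)\bigr)\bigl(13+10\cos(x)+4\cos^2(x)\bigr),$$ and the constant $2/27$ is best possible (it cannot be replaced by any larger constant). *)

From Stdlib Require Import Reals.
Open Scope R_scope.

Fixpoint sum_1_to (f : nat -> R) (m : nat) : R :=
  match m with
  | O => 0
  | S m' => sum_1_to f m' + f (S m')
  end.

Definition lhs (n : nat) (x : R) : R :=
  sum_1_to (fun k => (INR n - INR k + 1) * (INR n - INR k + 2) * (1 - cos (INR k * x))) n.

Definition rhs_core (x : R) : R :=
  (1 - cos x) * (13 + 10 * cos x + 4 * (cos x) ^ 2).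

(* Write c = cos x and q(c) = 13 + 10 c + 4 c^2, so that the right-hand side
   is (2/27) (1 - c) q(c).
   - Inequality.  Every summand of lhs n x is nonnegative, so lhs n x is at
     least its first term n (n + 1) (1 - c) >= 2 (1 - c).  Since
     27 - q(c) = 2 (1 - c) (7 + 2 c) > 0 for -1 <= c < 1, and 1 - c > 0 on
     (0, 2 pi / 3), we get 2 (1 - c) > (2/27) (1 - c) q(c).
   - Sharpness.  For n = 1 the two sides are 2 (1 - c) and C (1 - c) q(c).
     As x -> 0, q(cos x) -> 27; quantitatively q(cos x) >= 27 - 9 x^2 from
     cos x >= 1 - x^2 / 2.  Given C > 2/27 we pick 0 < x <= 1 with
     x^2 <= t := (27 C - 2) / (9 C), which makes C q(cos x) >= 2, so the
     strict inequality fails at (n, x) = (1, x). *)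

From Stdlib Require Import Reals Lra Lia.
Open Scope R_scope.

Lemma sum_1_to_ge_first (f : nat -> R) (m : nat) :
  (1 <= m)%nat -> (forall k, (1 <= k <= m)%nat -> 0 <= f k) ->
  f 1%nat <= sum_1_to f m.
Proof.
  induction m as [|m IH]; intros Hm Hf; [lia|].
  destruct m as [|m]; simpl sum_1_to.
  - lra.
  - assert (Hlast : 0 <= f (S (S m))) by (apply Hf; lia).
    assert (Hrest : f 1%nat <= sum_1_to f (S m)).
    { apply IH; [lia | intros k Hk; apply Hf; lia]. }
    simpl sum_1_to in Hrest |- *. lra.
Qed.

Lemma lhs_ge_first_term (n : nat) (x : R) :
  (1 <= n)%nat -> INR n * (INR n + 1) * (1 - cos x) <= lhs n x.
Proof.
  intros Hn. unfold lhs.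
  eapply Rle_trans; [| apply sum_1_to_ge_first; [exact Hn |]].
  - simpl INR. rewrite Rmult_1_l. right. ring.
  - intros k Hk.
    assert (INR k <= INR n) by (apply le_INR; lia).
    pose proof (COS_bound (INR k * x)).
    apply Rmult_le_pos; [apply Rmult_le_pos |]; lra.
Qed.

Lemma lhs_1 (x : R) : lhs 1 x = 2 * (1 - cos x).
Proof. unfold lhs; simpl sum_1_to; simpl INR. rewrite Rmult_1_l. ring. Qed.

Lemma cos_lt_1 (x : R) : 0 < x <= PI -> cos x < 1.
Proof.
  intros Hx. rewrite <- cos_0.
  apply cos_decreasing_1; pose proof PI_RGT_0; lra.
Qed.

Lemma cos_ge_taylor2 (x : R) : - PI / 2 <= x <= PI / 2 -> 1 - x ^ 2 / 2 <= cos x.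
Proof.
  intros Hx. destruct (cos_bound x 0) as [Hlb _]; try lra.
  unfold cos_approx, cos_term in Hlb. simpl in Hlb. lra.
Qed.

(* 27 - q(c) = 2 (1 - c) (7 + 2 c): the factor q is below 27 when c < 1. *)
Lemma quad_lt_27 (c : R) : -1 <= c < 1 -> 13 + 10 * c + 4 * c ^ 2 < 27.
Proof. intros Hc. nra. Qed.

(* With c = 1 - u: q(c) = 27 - 18 u + 4 u^2 >= 27 - 18 u, and u <= x^2 / 2. *)
Lemma quad_ge_27_minus (c x : R) :
  1 - x ^ 2 / 2 <= c <= 1 -> 27 - 9 * x ^ 2 <= 13 + 10 * c + 4 * c ^ 2.
Proof. intros Hc. nra. Qed.

Lemma lhs_gt_rhs (n : nat) (x : R) :
  (1 <= n)%nat -> 0 < x < 2 * PI / 3 -> lhs n x > 2 / 27 * rhs_core x.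
Proof.
  intros Hn Hx.
  assert (Hc1 : cos x < 1) by (apply cos_lt_1; pose proof PI_RGT_0; lra).
  pose proof (COS_bound x) as Hcb.
  assert (Hq : 13 + 10 * cos x + 4 * cos x ^ 2 < 27) by (apply quad_lt_27; lra).
  assert (Hnn : 2 <= INR n * (INR n + 1)).
  { assert (1 <= INR n) by (apply (le_INR 1); lia). nra. }
  pose proof (lhs_ge_first_term n x Hn) as Hfirst.
  unfold rhs_core. nra.
Qed.

Lemma constant_sharp (C : R) :
  C > 2 / 27 ->
  exists x : R, 0 < x < 2 * PI / 3 /\ ~ (lhs 1 x > C * rhs_core x).
Proof.
  intros HC.
  set (t := (27 * C - 2) / (9 * C)).
  assert (Ht : 0 < t) by (unfold t; apply Rdiv_lt_0_compat; lra).
  assert (HCt : C * (27 - 9 * t) = 2) by (unfold t; field; lra).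
  set (x := Rmin 1 t).
  assert (Hx0 : 0 < x) by (apply Rmin_glb_lt; lra).
  assert (Hx1 : x <= 1) by apply Rmin_l.
  assert (Hxt : x ^ 2 <= t) by (assert (x <= t) by apply Rmin_r; nra).
  pose proof PI2_3_2 as HPI.
  exists x. split; [lra |].
  assert (Hcos : 1 - x ^ 2 / 2 <= cos x) by (apply cos_ge_taylor2; lra).
  pose proof (COS_bound x) as Hcb.
  assert (Hq : 27 - 9 * t <= 13 + 10 * cos x + 4 * cos x ^ 2).
  { pose proof (quad_ge_27_minus (cos x) x (conj Hcos (proj2 Hcb))). lra. }
  assert (HCq : 2 <= C * (13 + 10 * cos x + 4 * cos x ^ 2)) by nra.
  rewrite lhs_1. unfold rhs_core. nra.
Qed.

Theorem mainTheorem7 :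
  (forall (n : nat) (x : R), (1 <= n)%nat -> 0 < x < 2 * PI / 3 ->
     lhs n x > 2 / 27 * rhs_core x)
  /\
  (forall c : R, c > 2 / 27 ->
     exists (n : nat) (x : R), (1 <= n)%nat /\ 0 < x < 2 * PI / 3 /\
       ~ (lhs n x > c * rhs_core x)).
Proof.
  split.
  - exact lhs_gt_rhs.
  - intros c Hc. destruct (constant_sharp c Hc) as [x [Hx Hfail]].
    exists 1%nat, x. split; [lia | split; assumption].
Qed.
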